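(* Let $r,d:[0,\infty)\to\mathbb{R}$ be Lipschitz continuous functions satisfying $r(0)>d(0)>0$, $r'<0$, $r(+\infty)=0$ and $d'>0$. Let $n_C^0\ge 0$ be an integrable function on $[0,\infty)$ which is positive on a neighbourhood of $x=0$, and let $n_C(x,t)$ be the solution of $$\frac{\partial}{\partial t} n_C(x,t)=\big[r(x)-d(x)\big]\,n_C(x,t),\qquad x\ge 0,\ t>0,\qquad n_C(x,0)=n_C^0(x)$$ (i.e. the cancer-cell model with no therapy, $c(t)\equiv 0$, and no mutations, $\theta_C=0$). Set $\rho_C(t)=\int_0^\infty n_C(x,t)\,dx$. Then $\rho_C(t)\to\infty$ as $t\to\infty$ with an exponential rate (there exist $\lambda>0$ and $C>0$ with $\rho_C(t)\ge Ce^{\lambda t}$ for all $t\ge0$), and $$\frac{n_C(\cdot,t)}{\rho_C(t)}\longrightarrow \delta(x)\quad\text{as } t\to\infty,$$ weakly in the sense of measures.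
   Context: $n_C(x,t)$ is the density of cancer cells with resistance-gene expression level $x\in[0,\infty)$ at time $t$; $r$ is the reproduction rate and $d$ the death rate; $\delta(x)$ is the Dirac mass at $x=0$. *)

From HB Require Import structures.
From mathcomp Require Import all_boot all_order all_algebra.
From mathcomp Require Import all_classical all_reals all_analysis.
Set Implicit Arguments. Unset Strict Implicit. Unset Printing Implicit Defensive.
Import Order.TTheory GRing.Theory Num.Theory.
Import numFieldNormedType.Exports.
Local Open Scope classical_set_scope.
Local Open Scope ring_scope.

Definition lipschitz_on_halfline {R : realType} (f : R -> R) : Prop :=
  exists k : R, forall x y : R, 0 <= x -> 0 <= y -> `|f x - f y| <= k * `|x - y|.

Definition rhoC {R : realType} (n : R -> R -> R) (t : R) : R :=
  Rintegral (@lebesgue_measure R) `[0%R, +oo[ (fun x => n x t).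

Definition bounded_continuous_halfline {R : realType} (phi : R -> R) : Prop :=
  {within `[0%R, +oo[, continuous phi} /\
  exists M : R, forall x : R, 0 <= x -> `|phi x| <= M.

Definition weak_cvg_to_dirac0 {R : realType} (n : R -> R -> R) : Prop :=
  forall phi : R -> R, bounded_continuous_halfline phi ->
    (Rintegral (@lebesgue_measure R) `[0%R, +oo[ (fun x => phi x * n x t)
       / rhoC n t) @[t --> +oo] --> phi 0.

From HB Require Import structures.
From mathcomp Require Import all_boot all_order all_algebra.
From mathcomp Require Import all_classical all_reals all_analysis.
From mathcomp Require Import ring lra.
Set Implicit Arguments.
Unset Strict Implicit.
Unset Printing Implicit Defensive.
Import Order.TTheory GRing.Theory Num.Theory.
Import numFieldNormedType.Exports.
Local Open Scope classical_set_scope.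
Local Open Scope ring_scope.

(* The solution is explicit: [n x t = n0 x * expR (g x * t)] with [g = r - d],
   a Lipschitz function, strictly decreasing on [(0, +oo)], with [g 0 > 0].
   Pick [a > 0] with [g a > 0] inside the region where [n0 > 0]: the mass of
   [n0] on [(0, a]] already grows like [expR (g a * t)], hence so does [rhoC].
   For the weak limit, split [|phi x - phi 0| * n x t] at a [del > a] below
   which [phi] is [e]-close to [phi 0]: the part near [0] is at most [e * rhoC],
   while the part beyond [del] is [O(expR (g del * t))], negligible against
   [rhoC >= c * expR (g a * t)] because [g del < g a]. *)

Section halfline_lipschitz.
Context {R : realType}.
Implicit Types f g : R -> R.

Lemma lipschitz_on_halflineB f g : lipschitz_on_halfline f ->
  lipschitz_on_halfline g -> lipschitz_on_halfline (fun x => f x - g x).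
Proof.
move=> [kf hf] [kg hg]; exists (kf + kg) => x y x0 y0.
have -> : f x - g x - (f y - g y) = (f x - f y) - (g x - g y) by ring.
rewrite mulrDl; apply: le_trans (ler_normB _ _) _.
exact: lerD (hf _ _ x0 y0) (hg _ _ x0 y0).
Qed.

Lemma lipschitz_on_halfline_dist0 f : lipschitz_on_halfline f ->
  exists2 K, 0 <= K & forall x, 0 <= x -> `|f x - f 0| <= K * x.
Proof.
move=> [k hk]; exists `|k| => // x x0.
apply: le_trans (hk x 0 x0 (lexx 0)) _.
by rewrite subr0 ger0_norm // ler_wpM2r // ler_norm.
Qed.

Lemma lipschitz_continuous f (K : R) :
  (forall x y, `|f x - f y| <= K * `|x - y|) -> continuous f.
Proof.
move=> hf x; apply/cvgrPdist_lt => e e0.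
have K1 : 0 < `|K| + 1 by rewrite ltr_pwDr.
near=> y; apply: le_lt_trans (hf x y) _.
apply: (@le_lt_trans _ _ ((`|K| + 1) * `|x - y|)).
  by rewrite ler_wpM2r // (le_trans (ler_norm K)) // lerDl.
rewrite -ltr_pdivlMl //.
near: y; apply/nbhs_normP; exists (e / (`|K| + 1)); first by rewrite /= divr_gt0.
by move=> z /=; rewrite mulrC.
Unshelve. all: by end_near.
Qed.

(* Extending [f] by the constant [f 0] to the left gives a globally Lipschitz,
   hence continuous, function. *)
Lemma lipschitz_on_halfline_measurable f : lipschitz_on_halfline f ->
  measurable_fun (`[0%R, +oo[ : set R) f.
Proof.
move=> [k hk].
pose fe x := if x < 0 then f 0 else f x.
have fe_cont : continuous fe.
  apply: (@lipschitz_continuous _ `|k|) => x y.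
  have hk' u v : 0 <= u -> 0 <= v -> `|f u - f v| <= `|k| * `|u - v|.
    move=> u0 v0; apply: le_trans (hk u v u0 v0) _.
    by rewrite ler_wpM2r // ler_norm.
  rewrite /fe; have [x0|x0] := ltP x 0; have [y0|y0] := ltP y 0.
  - by rewrite subrr normr0 mulr_ge0.
  - apply: le_trans (hk' _ _ (lexx 0) y0) _; rewrite ler_wpM2l //.
    by rewrite sub0r normrN (ger0_norm y0) ler0_norm; lra.
  - apply: le_trans (hk' _ _ x0 (lexx 0)) _; rewrite ler_wpM2l //.
    by rewrite subr0 (ger0_norm x0) ger0_norm; lra.
  - exact: hk'.
apply: (eq_measurable_fun fe).
  by move=> x; rewrite inE /= in_itv /= andbT => x0; rewrite /fe ltNge x0.
exact: measurable_funTS (measurable_realfun.continuous_measurable_fun fe_cont).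
Qed.

Lemma decr_lipschitz0_ubound f (K : R) :
  (forall x, 0 <= x -> `|f x - f 0| <= K * x) ->
  (forall x y, 0 < x -> x < y -> f y < f x) ->
  forall x, 0 <= x -> f x <= f 0 + K.
Proof.
move=> f0 fdecr x x0; have K0 : 0 <= K.
  by have := f0 1 ler01; rewrite mulr1; apply: le_trans.
have near0 y : 0 <= y <= 1 -> f y <= f 0 + K.
  move=> /andP[y0 y1]; have := f0 y y0; have := ler_norm (f y - f 0).
  have : K * y <= K by rewrite -[leRHS]mulr1 ler_wpM2l.
  lra.
have [x1|x1] := leP x 1; first by rewrite near0 // x0.
by apply: le_trans (ltW (fdecr 1 x ltr01 x1)) _; rewrite near0 // ler01 lexx.
Qed.

End halfline_lipschitz.

Section derivative.
Context {R : realType}.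
Implicit Types f : R -> R.

Lemma derive1_lt0_decr f :
  (forall x, 0 < x -> derivable f x 1 /\ derive1 f x < 0) ->
  forall x y, 0 < x -> x < y -> f y < f x.
Proof.
move=> fd x y x0 xy; have y0 : 0 < y := lt_trans x0 xy.
apply: (@ltr0_derive1_lt_oo _ f 0 (y + 1)).
- by move=> z; rewrite in_itv /= => /andP[z0 _]; exact: (fd z z0).1.
- by move=> z; rewrite in_itv /= => /andP[z0 _]; exact: (fd z z0).2.
- move=> z /set_mem; rewrite /= in_itv /= => /andP[z0 _].
  exact/differentiable_continuous/derivable1_diffP/(fd z z0).1.
- by rewrite in_itv /=; apply/andP; split; lra.
- by rewrite in_itv /=; apply/andP; split; lra.
- exact: xy.
Qed.

(* [f u * expR (- c * u)] has zero derivative on [(0, +oo)] and tends to [y0]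
   at [0+]. *)
Lemma linear_ode_expR f (c y0 : R) :
  f 0 = y0 -> f t @[t --> 0^'+] --> y0 ->
  (forall t, 0 < t -> derivable f t 1 /\ derive1 f t = c * f t) ->
  forall t, 0 <= t -> f t = y0 * expR (c * t).
Proof.
move=> f0 f0cvg fd t; rewrite le_eqVlt => /predU1P[<-|t0].
  by rewrite mulr0 expR0 mulr1.
pose h u := f u * expR (- c * u).
have expNc_derive (u : R) :
    is_derive u 1 (fun v => expR (- c * v)) (expR (- c * u) * - c).
  apply: (@is_derive1_comp _ expR (fun v => - c * v)).
  by have := is_deriveZ (- c) (is_derive_id u (1 : R)); rewrite [_ *: 1]mulr1.
have h_derive (u : R) : 0 < u -> is_derive u 1 h 0.
  move=> u0; have [fdu fdv] := fd u u0.
  have : is_derive u 1 f (c * f u) by apply: DeriveDef => //; rewrite -derive1E.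
  move=> /is_deriveM /(_ (expNc_derive u)) /is_derive_eq; apply.
  by rewrite /GRing.scale /=; ring.
have h_cst (s u : R) : 0 < s -> s <= u -> h u = h s.
  move=> s0 su.
  have h_derive_su z : z \in `]s, u[ -> is_derive z 1 h 0.
    by rewrite in_itv /= => /andP[sz _]; exact/h_derive/(lt_trans s0 sz).
  have h_cont : {within `[s, u], continuous h}.
    apply: derivable_within_continuous => z; rewrite in_itv /= => /andP[sz _].
    exact: (@ex_derive _ _ _ _ _ _ _ (h_derive z (lt_le_trans s0 sz))).
  have [z _] := MVT_segment su h_derive_su h_cont.
  by rewrite mul0r => /eqP; rewrite subr_eq0 => /eqP.
have h_cvg_y0 : h u @[u --> 0^'+] --> y0.
  have : expR (- c * u) @[u --> 0^'+] --> expR (- c * 0).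
    apply: cvg_at_right_filter.
    have /derivable1_diffP := @ex_derive _ _ _ _ _ _ _ (expNc_derive 0).
    exact: differentiable_continuous.
  by rewrite mulr0 expR0 -[y0]mulr1; apply: cvgM f0cvg.
have h_cvg_ht : h u @[u --> 0^'+] --> h t.
  apply: cvg_near_cst; near=> u; apply/esym/h_cst.
  - by near: u; exact: nbhs_right_gt.
  - by near: u; exact: nbhs_right_le.
rewrite (norm_cvg_unique h_cvg_y0 h_cvg_ht) /h -mulrA -expRD.
by rewrite mulNr addNr expR0 mulr1.
Unshelve. all: by end_near.
Qed.

End derivative.

Lemma integral_gt0 d (T : measurableType d) (R : realType)
    (mu : {measure set T -> \bar R}) (D : set T) (f : T -> R) :
  measurable D -> (0 < mu D)%E -> measurable_fun D f ->
  (forall x, D x -> 0 < f x) -> (0 < \int[mu]_(x in D) (f x)%:E)%E.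
Proof.
move=> mD muD0 mf f0.
have int_ge0 : (0 <= \int[mu]_(x in D) (f x)%:E)%E.
  by apply: integral_ge0 => x Dx; rewrite lee_fin ltW // f0.
rewrite lt_neqAle int_ge0 andbT; apply/negP => /eqP int0.
have abs_int0 : (\int[mu]_(x in D) `|(EFin \o f) x|)%E = 0.
  rewrite int0; apply: eq_integral => x; rewrite inE => Dx.
  by rewrite /= ger0_norm // ltW // f0.
have mEf := (measurable_realfun.measurable_EFinP D f).2 mf.
have [N [mN N0 DN]] := (ae_eq_integral_abs mu mD mEf).1 abs_int0.
have : D `<=` N.
  move=> x Dx; apply: DN => /(_ Dx) [] fx0.
  by have := f0 x Dx; rewrite fx0 ltxx.
move=> /(subset_measure0 mD mN)/(_ N0) muD.
by rewrite muD ltxx in muD0.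
Qed.

Section real_limits.
Context {R : realType}.

Lemma cvgry_ge_expR (rho : R -> R) (c lam : R) : 0 < c -> 0 < lam ->
  (forall t, 0 <= t -> c * expR (lam * t) <= rho t) ->
  rho t @[t --> +oo] --> +oo.
Proof.
move=> c0 lam0 rho_ge; apply: (@ger_cvgy _ _ _ _ (fun t => (c * lam) * t)).
  near=> t; apply: le_trans (rho_ge t _); last by near: t; exact: nbhs_pinfty_ge.
  by rewrite -mulrA ler_pM2l //; apply: le_trans (expR_ge1Dx _); rewrite lerDr.
exact: gt0_cvgMry (mulr_gt0 c0 lam0) _.
Unshelve. all: by end_near.
Qed.

Lemma mulr_expRN_cvg0 (K m : R) : 0 < m -> K * expR (- m * t) @[t --> +oo] --> 0.
Proof.
move=> m0; rewrite -(mulr0 K); apply: cvgM; first exact: cvg_cst.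
under eq_fun do rewrite mulNr.
apply: (cvg_comp (fun t => m * t) (fun x => expR (- x)) _ (@cvgr_expR R)).
exact: gt0_cvgMry.
Qed.

Lemma halfline_continuous_at0 (phi : R -> R) (e : R) :
  {within `[0%R, +oo[, continuous phi} -> 0 < e ->
  exists2 del, 0 < del & forall x, 0 <= x < del -> `|phi 0 - phi x| < e.
Proof.
move=> phi_cont e0.
have [_] := (continuous_within_itvcyP 0 phi).1 phi_cont.
move=> /cvgrPdist_lt /(_ e e0); rewrite /at_right near_withinE.
move=> /nbhs_normP [del /= del0 phi_near]; exists del => // x /andP[x0 xdel].
move: x0; rewrite le_eqVlt => /predU1P[<-|x0]; first by rewrite subrr normr0.
by apply: phi_near => //=; rewrite sub0r normrN ger0_norm // ltW.
Qed.

Lemma exists_small_pos (K c eps : R) : 0 <= K -> 0 < c -> 0 < eps ->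
  exists2 a, 0 < a < eps & K * a < c.
Proof.
move=> K0 c0 eps0; have K1 : 0 < K + 1 by lra.
have Kc : K * (c / (K + 1)) < c.
  by rewrite mulrA ltr_pdivrMr // mulrC mulrDr mulr1 ltrDl.
have [h|h] := leP (eps / 2) (c / (K + 1)).
- exists (eps / 2); first by apply/andP; split; lra.
  by apply: le_lt_trans Kc; rewrite ler_wpM2l.
- exists (c / (K + 1)) => //; apply/andP; split; last by lra.
  by rewrite divr_gt0.
Qed.

End real_limits.

Section explicit_solution.
Context {R : realType}.
Local Notation mu := (@lebesgue_measure R).
Local Notation halfline := (`[0%R, +oo[%classic : set R).
Variables (g n0 : R -> R) (n : R -> R -> R) (B : R).
Hypothesis n_expR : forall x t, 0 <= x -> 0 <= t -> n x t = n0 x * expR (g x * t).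
Hypothesis g_measurable : measurable_fun halfline g.
Hypothesis g_ub : forall x, 0 <= x -> g x <= B.
Hypothesis g_decr : forall x y, 0 < x -> x < y -> g y < g x.
Hypothesis n0_ge0 : forall x, 0 <= x -> 0 <= n0 x.
Hypothesis n0_integrable : mu.-integrable halfline (EFin \o n0).

Let n0_measurable : measurable_fun halfline n0.
Proof.
by apply/measurable_realfun.measurable_EFinP; exact: measurable_int n0_integrable.
Qed.

Lemma n_ge0 x t : 0 <= x -> 0 <= t -> 0 <= n x t.
Proof. by move=> x0 t0; rewrite n_expR // mulr_ge0 ?n0_ge0 ?expR_ge0. Qed.

Lemma measurable_n t : 0 <= t -> measurable_fun halfline (n ^~ t).
Proof.
move=> t0; apply: (eq_measurable_fun (fun x => n0 x * expR (g x * t))).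
  by move=> x; rewrite inE /= in_itv /= andbT => x0; rewrite n_expR.
apply: measurable_realfun.measurable_funM => //.
apply: measurableT_comp; first exact: measurable_realfun.measurable_expR.
exact: measurable_realfun.measurable_funM.
Qed.

Lemma integrable_n t : 0 <= t -> mu.-integrable halfline (EFin \o n ^~ t).
Proof.
move=> t0.
apply: (le_integrable _ _ _ (integrableZl _ (expR (B * t)) n0_integrable)).
- exact: measurable_itv.
- by apply/measurable_realfun.measurable_EFinP; exact: measurable_n.
- move=> x /=; rewrite in_itv /= andbT => x0.
  rewrite lee_fin !ger0_norm ?n_ge0 ?mulr_ge0 ?expR_ge0 ?n0_ge0 //.
  by rewrite n_expR // mulrC ler_wpM2r ?n0_ge0 // ler_expR ler_wpM2r // g_ub.
- exact: measurable_itv.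
Qed.

Lemma rhoC_ge_expR a : 0 < a -> (forall x, 0 < x <= a -> 0 < n0 x) ->
  exists2 c, 0 < c & forall t, 0 <= t -> c * expR (g a * t) <= rhoC n t.
Proof.
move=> a0 n0_pos.
have sub_a : `]0%R, a] `<=` halfline.
  by move=> x /=; rewrite !in_itv /= andbT => /andP[/ltW].
have n0_integrable_a : mu.-integrable `]0%R, a] (EFin \o n0).
  by apply: integrableS n0_integrable => //; exact: measurable_itv.
have n0_measurable_a := measurable_funS (measurable_itv _) sub_a n0_measurable.
have mu_a : (0 < mu `]0%R, a])%E.
  by rewrite lebesgue_measure_itv /= lte_fin a0 /= sube0 lte_fin.
have n0_int_a_gt0 : (0 < \int[mu]_(x in `]0%R, a]) (n0 x)%:E)%E.
  by apply: integral_gt0.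
have n0_int_a_fin : (\int[mu]_(x in `]0%R, a]) (n0 x)%:E)%E \is a fin_num.
  exact: integrable_fin_num _ n0_integrable_a.
exists (fine (\int[mu]_(x in `]0%R, a]) (n0 x)%:E)).
  by apply: fine_gt0; rewrite n0_int_a_gt0 -ge0_fin_numE ?n0_int_a_fin ?ltW.
move=> t t0; rewrite /rhoC /Rintegral -lee_fin EFinM fineK // fineK; last first.
  exact: integrable_fin_num _ (integrable_n t0).
rewrite muleC -ge0_integralZl //; first last.
- by move=> x /=; rewrite in_itv /= => /andP[x0 _]; rewrite lee_fin n0_ge0 // ltW.
- by apply/measurable_realfun.measurable_EFinP.
have int_a_le : (\int[mu]_(x in `]0%R, a]) (n x t)%:E
                  <= \int[mu]_(x in halfline) (n x t)%:E)%E.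
  apply: ge0_subset_integral => //; try exact: measurable_itv.
  - by apply/measurable_realfun.measurable_EFinP; exact: measurable_n.
  - by move=> x /=; rewrite in_itv /= andbT => x0; rewrite lee_fin n_ge0.
apply: le_trans int_a_le.
apply: ge0_le_integral; try exact: measurable_itv.
- move=> x /=; rewrite in_itv /= => /andP[x0 _].
  by rewrite lee_fin mulr_ge0 ?expR_ge0 ?n0_ge0 // ltW.
- apply/measurable_realfun.measurable_EFinP.
  exact: measurable_realfun.measurable_funM.
- apply/measurable_realfun.measurable_EFinP.
  exact: measurable_funS _ sub_a (measurable_n t0).
- move=> x /=; rewrite in_itv /= => /andP[x0 xa].
  have x_ge0 := ltW x0.
  rewrite -EFinM lee_fin n_expR // [n0 x * _]mulrC ler_wpM2r ?n0_ge0 //.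
  rewrite ler_expR ler_wpM2r //.
  by move: xa; rewrite le_eqVlt => /predU1P[-> //|/(g_decr x0)/ltW].
Qed.

Lemma integrable_bounded_mul_n (phi : R -> R) (M t : R) :
  0 <= t -> measurable_fun halfline phi ->
  (forall x, 0 <= x -> `|phi x| <= M) ->
  mu.-integrable halfline (EFin \o (fun x => phi x * n x t)).
Proof.
move=> t0 mphi phiM.
apply: le_integrable (integrableZl _ M (integrable_n t0)).
- exact: measurable_itv.
- apply/measurable_realfun.measurable_EFinP.
  exact: measurable_realfun.measurable_funM mphi (measurable_n t0).
- move=> x /=; rewrite in_itv /= andbT => x0.
  have M0 : 0 <= M := le_trans (normr_ge0 _) (phiM x x0).
  rewrite lee_fin normrM [`|M * _|]normrM (ger0_norm M0) ler_wpM2r //.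
  exact: phiM.
- exact: measurable_itv.
Qed.

Lemma moment_sub_rhoC_le (phi : R -> R) (M e del t : R) : 0 <= t -> 0 < del ->
  measurable_fun halfline phi -> (forall x, 0 <= x -> `|phi x| <= M) ->
  (forall x, 0 <= x < del -> `|phi 0 - phi x| <= e) ->
  `|\int[mu]_(x in halfline) (phi x * n x t) - phi 0 * rhoC n t|
    <= e * rhoC n t + 2 * M * expR (g del * t) * \int[mu]_(x in halfline) n0 x.
Proof.
move=> t0 del0 mphi phiM phi_near.
have e0 : 0 <= e by apply: le_trans (phi_near 0 _); rewrite ?lexx.
have int_n := integrable_n t0.
have int_Zn k : mu.-integrable halfline (EFin \o (fun x => k * n x t)).
  by apply: (integrableZl _ k int_n); exact: measurable_itv.
have int_Zn0 k : mu.-integrable halfline (EFin \o (fun x => k * n0 x)).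
  by apply: (integrableZl _ k n0_integrable); exact: measurable_itv.
have int_phin := integrable_bounded_mul_n t0 mphi phiM.
have int_dev : mu.-integrable halfline
    (EFin \o (fun x => phi x * n x t - phi 0 * n x t)).
  by apply: integrableB int_phin (int_Zn _); exact: measurable_itv.
have int_bound : mu.-integrable halfline
    (EFin \o (fun x => e * n x t + 2 * M * expR (g del * t) * n0 x)).
  by apply: integrableD (int_Zn _) (int_Zn0 _); exact: measurable_itv.
rewrite /rhoC -!RintegralZl // -RintegralB // -RintegralD //.
apply: le_trans; first by apply: le_normr_Rintegral int_dev; exact: measurable_itv.
apply: le_Rintegral (integrable_norm int_dev) int_bound _; first exact: measurable_itv.
move=> x /=; rewrite in_itv /= andbT => x0.
have M0 : 0 <= M := le_trans (normr_ge0 _) (phiM 0 (lexx 0)).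
have nx0 := n_ge0 x0 t0.
rewrite -mulrBl normrM (ger0_norm nx0).
have [xdel|delx] := ltP x del.
- rewrite -[leLHS]addr0; apply: lerD; last by rewrite !mulr_ge0 ?expR_ge0 ?n0_ge0.
  by rewrite ler_wpM2r // distrC phi_near // x0.
- rewrite -[leLHS]add0r; apply: lerD; first by rewrite mulr_ge0.
  rewrite n_expR // [n0 x * _]mulrC mulrA ler_wpM2r ?n0_ge0 //.
  apply: ler_pM; rewrite ?normr_ge0 ?expR_ge0 //.
    apply: le_trans (ler_normB _ _) _.
    by rewrite mulr2n mulrDl mul1r lerD ?phiM.
  rewrite ler_expR ler_wpM2r //.
  by move: delx; rewrite le_eqVlt => /predU1P[-> //|/(g_decr del0)/ltW].
Qed.

Lemma weak_cvg_to_dirac0_expR eps : 0 < eps ->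
  (forall x, 0 <= x < eps -> 0 < n0 x) -> weak_cvg_to_dirac0 n.
Proof.
move=> eps0 n0_pos phi [phi_cont [M phiM]].
have mphi : measurable_fun halfline phi.
  by apply: measurable_realfun.subspace_continuous_measurable_fun => //;
    exact: measurable_itv.
apply/cvgrPdist_lt => e e0; have e20 : 0 < e / 2 by rewrite divr_gt0.
have [del del0 phi_near] := halfline_continuous_at0 phi_cont e20.
have [a a0 [adel aeps]] : exists2 a, 0 < a & a < del /\ a < eps.
  by case: (leP del eps) => h; [exists (del / 2) | exists (eps / 2)]; lra.
have [c c0 rho_ge] : exists2 c, 0 < c &
    forall t, 0 <= t -> c * expR (g a * t) <= rhoC n t.
  apply: rhoC_ge_expR a0 _ => x /andP[x0 xa].
  by apply: n0_pos; rewrite ltW //=; lra.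
pose N := \int[mu]_(x in halfline) n0 x.
have gap : 0 < g a - g del by rewrite subr_gt0 g_decr.
have := mulr_expRN_cvg0 (2 * M * N / c) gap.
move=> /cvgrPdist_lt /(_ _ e20) tail_small.
near=> t.
have t0 : 0 <= t by near: t; exact: nbhs_pinfty_ge.
have rho_pos : 0 < rhoC n t := lt_le_trans (mulr_gt0 c0 (expR_gt0 _)) (rho_ge t t0).
have dev := moment_sub_rhoC_le t0 del0 mphi phiM
  (fun x hx => ltW (phi_near x hx)).
have tail : 2 * M * expR (g del * t) * N < e / 2 * (c * expR (g a * t)).
  have small : 2 * M * N / c * expR (- (g a - g del) * t) < e / 2.
    near: t; apply: filterS tail_small => t.
    by rewrite sub0r normrN; apply: le_lt_trans (ler_norm _).
  have -> : expR (g del * t) = expR (- (g a - g del) * t) * expR (g a * t).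
    by rewrite -expRD; congr expR; ring.
  have -> : 2 * M * (expR (- (g a - g del) * t) * expR (g a * t)) * N
      = 2 * M * N / c * expR (- (g a - g del) * t) * (c * expR (g a * t)).
    by field; rewrite gt_eqF.
  by rewrite ltr_pM2r // mulr_gt0 ?expR_gt0.
have -> : phi 0 - (\int[mu]_(x in halfline) (phi x * n x t)) / rhoC n t
    = - ((\int[mu]_(x in halfline) (phi x * n x t) - phi 0 * rhoC n t) / rhoC n t).
  by field; rewrite gt_eqF.
have rho_inv_pos : 0 < (rhoC n t)^-1 by rewrite invr_gt0.
rewrite normrN normrM (gtr0_norm rho_inv_pos) ltr_pdivrMr //.
apply: le_lt_trans dev _.
have -> : e * rhoC n t = e / 2 * rhoC n t + e / 2 * rhoC n t.
  by rewrite -mulrDl -splitr.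
rewrite ltrD2l.
by apply: lt_le_trans tail _; rewrite ler_wpM2l ?rho_ge // ltW.
Unshelve. all: by end_near.
Qed.

End explicit_solution.

Theorem lemma2p2 (R : realType) (r d n0 : R -> R) (n : R -> R -> R) :
  lipschitz_on_halfline r -> lipschitz_on_halfline d ->
  r 0 > d 0 -> d 0 > 0 ->
  (forall x : R, 0 < x -> derivable r x 1 /\ derive1 r x < 0) ->
  r x @[x --> +oo] --> 0 ->
  (forall x : R, 0 < x -> derivable d x 1 /\ derive1 d x > 0) ->
  (forall x : R, 0 <= x -> 0 <= n0 x) ->
  (@lebesgue_measure R).-integrable `[0%R, +oo[ (EFin \o n0) ->
  (exists eps : R, 0 < eps /\ forall x : R, 0 <= x < eps -> 0 < n0 x) ->
  (forall x : R, 0 <= x ->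
     n x 0 = n0 x /\
     n x t @[t --> 0^'+] --> n0 x /\
     (forall t : R, 0 < t ->
        derivable (n x) t 1 /\ derive1 (n x) t = (r x - d x) * n x t)) ->
  (rhoC n t @[t --> +oo] --> +oo /\
   exists lam C : R, 0 < lam /\ 0 < C /\
     forall t : R, 0 <= t -> C * expR (lam * t) <= rhoC n t) /\
  weak_cvg_to_dirac0 n.
Proof.
move=> r_lip d_lip rd0 _ r_decr _ d_incr n0_ge0 n0_int [eps [eps0 n0_pos]].
move=> n_ode.
pose g x := r x - d x.
have g_lip : lipschitz_on_halfline g := lipschitz_on_halflineB r_lip d_lip.
have g_decr : forall x y, 0 < x -> x < y -> g y < g x.
  apply: derive1_lt0_decr => x x0; have [dr r'] := r_decr x x0.
  have [dd d'] := d_incr x x0.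
  by split; [exact: derivableB | rewrite derive1E deriveB // -!derive1E; lra].
have n_expR x t : 0 <= x -> 0 <= t -> n x t = n0 x * expR (g x * t).
  by move=> x0; have [n_x0 [n_cvg n_deriv]] := n_ode x x0; exact: linear_ode_expR.
have [K K0 gK] := lipschitz_on_halfline_dist0 g_lip.
have g_ub := decr_lipschitz0_ubound gK g_decr.
have g_meas := lipschitz_on_halfline_measurable g_lip.
have g00 : 0 < g 0 by rewrite subr_gt0.
have [a /andP[a0 aeps] Ka] := exists_small_pos K0 g00 eps0.
have ga0 : 0 < g a.
  by have := gK a (ltW a0); rewrite ler_distl => /andP[+ _]; lra.
have n0_pos_a x : 0 < x <= a -> 0 < n0 x.
  by move=> /andP[x0 xa]; apply: n0_pos; rewrite ltW // (le_lt_trans xa aeps).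
have [c c0 rho_ge] :=
  rhoC_ge_expR n_expR g_meas g_ub g_decr n0_ge0 n0_int a0 n0_pos_a.
have dirac_limit :=
  weak_cvg_to_dirac0_expR n_expR g_meas g_ub g_decr n0_ge0 n0_int eps0 n0_pos.
split; last exact: dirac_limit.
by split; [exact: cvgry_ge_expR c0 ga0 rho_ge | exists (g a), c].
Qed.
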